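(* Let $X$ be the Cantor set, $\alpha$ a minimal homeomorphism of $X$, and $\phi:X\to\operatorname{Isom}(\mathbb{T})$ continuous such that $\alpha\times\phi$ is minimal and not orientation preserving. Let $x_0\in X$ and let $\mathcal P=\{X(v,k):v\in V,\ k=1,\dots,h(v)\}$ be a Kakutani–Rohlin partition for $(X,\alpha)$ such that $x_0\in R(\mathcal P)$ and $o(\phi)$ is constant on each clopen set of $\widetilde{\mathcal P}$. Then $h_\phi$ is equivalent to $\sum_{v\in V,\ o(\phi)_v=1}1_{X(v,h(v))}$ in $K_1(A_{x_0})$.
   Context: $\alpha\times\phi:(x,t)\mapsto(\alpha(x),\phi_x(t))$; $o(\phi)(x)=0$ if $\phi_x$ preserves orientation and $1$ otherwise; $\alpha\times\phi$ is orientation preserving iff $o(\phi)\in\{f-f\circ\alpha^{-1}:f\in C(X,\mathbb{Z}_2)\}$. Define the automorphism $\alpha_\phi^*$ of $C(X,\mathbb{Z})$ by $\alpha_\phi^*(f)(x)=(-1)^{o(\phi)(\alpha^{-1}(x))}f(\alpha^{-1}(x))$ (this is the map induced by $\alpha\times\phi$ on $K_1(C(X\times\mathbb{T}))\cong C(X,\mathbb{Z})$). With $A_{x_0}$ the $C^*$-subalgebra of $C^*(X\times\mathbb{T},\alpha\times\phi)$ generated by $C(X\times\mathbb{T})$ and $uC_0((X\setminus\{x_0\})\times\mathbb{T})$, $K_1(A_{x_0})$ is identified with $C(X,\mathbb{Z})/\{f-\alpha_\phi^*(f):f\in C(X,\mathbb{Z}),f(x_0)=0\}$; ''$f$ is equivalent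 to $g$ in $K_1(A_{x_0})$'' means $f-g$ lies in that subgroup. $h_\phi\in C(X,\mathbb{Z})$ is $h_\phi(x)=1$ if $o(\phi)(\alpha^{-1}(x))=1$ and $0$ otherwise. A Kakutani–Rohlin partition is a clopen partition $\{X(v,k)\}$ with $\alpha(X(v,k))=X(v,k+1)$ for $k<h(v)$ and $\alpha(\bigcup_vX(v,h(v)))=\bigcup_vX(v,1)$; $R(\mathcal P)=\bigcup_vX(v,h(v))$ is the roof set, $\widetilde{\mathcal P}=\{X(v,k):k<h(v)\}\cup\{R(\mathcal P)\}$, and $o(\phi)_v=\sum_{i=0}^{h(v)-1}o(\phi)(\alpha^i(x))\in\mathbb{Z}_2$ for any $x\in X(v,1)$. *)

From HB Require Import structures.
From mathcomp Require Import all_boot all_order all_algebra.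
From mathcomp Require Import all_classical all_reals all_analysis.
Set Implicit Arguments. Unset Strict Implicit. Unset Printing Implicit Defensive.
Import Order.TTheory GRing.Theory Num.Theory numFieldNormedType.Exports.
Local Open Scope classical_set_scope.
Local Open Scope ring_scope.

(* X = the Cantor set: we use the concrete Cantor space bool^nat of
   mathcomp-analysis (cantor.v). *)
Notation X := cantor_space.

Definition minimal_map (T : topologicalType) (f : T -> T) : Prop :=
  forall A : set T, closed A -> f @` A `<=` A -> A = set0 \/ A = setT.

Definition locally_constant (T : topologicalType) (U : Type) (f : T -> U) :=
  forall x : T, \forall y \near x, f y = f x.

(* The circle T = R/Z is represented by real numbers taken modulo 1.
   An isometry of T is t |-> t + th (orientation preserving) or
   t |-> -t + th (orientation reversing).  A map phi : X -> Isom(T) is thus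
   given by  o : X -> bool  (o x = true iff phi_x reverses orientation,
   i.e. o = o(phi))  and  th : X -> R  (taken mod 1). *)
Definition isomT (R : realType) (o : bool) (th t : R) : R :=
  (if o then - t else t) + th.

Definition continuous_mod1 (R : realType) (th : X -> R) : Prop :=
  forall (x : X) (e : R), 0 < e ->
    \forall y \near x, exists k : int, `|th y - th x - k%:~R| < e.

(* Continuity of phi : X -> Isom(T) (topology of uniform convergence,
   Isom(T) = Z/2 x T as a topological space). *)
Definition continuous_phi (R : realType) (o : X -> bool) (th : X -> R) :=
  locally_constant o /\ continuous_mod1 th.

(* The skew product alpha x phi on X x R (lifting X x T). *)
Definition skew (R : realType) (a : X -> X) (o : X -> bool) (th : X -> R)
  (p : X * R) : X * R :=
  (a p.1, isomT (o p.1) (th p.1) p.2).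

(* Minimality of alpha x phi on X x T: closed subsets of X x T are the
   closed Z-periodic (in the second coordinate) subsets of X x R. *)
Definition skew_minimal (R : realType) (a : X -> X) (o : X -> bool)
  (th : X -> R) : Prop :=
  forall A : set (X * R), closed A ->
    (forall x t, A (x, t) -> A (x, t + 1) /\ A (x, t - 1)) ->
    skew a o th @` A `<=` A -> A = set0 \/ A = setT.

(* alpha x phi is orientation preserving iff
   o(phi) \in { f - f o alpha^{-1} : f \in C(X, Z_2) }. *)
Definition orientation_preserving (ai : X -> X) (o : X -> bool) : Prop :=
  exists f : X -> bool, locally_constant f /\ forall x, o x = f x (+) f (ai x).

Definition roof (V : finType) (h : V -> nat) (P : V -> nat -> set X) : set X :=
  [set x | exists v, P v (h v) x].
Definition base (V : finType) (P : V -> nat -> set X) : set X :=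
  [set x | exists v, P v 1%N x].

Definition KR_partition (a : X -> X) (V : finType) (h : V -> nat)
  (P : V -> nat -> set X) : Prop :=
  (forall v, (0 < h v)%N) /\
  [/\
      (forall v k, (1 <= k <= h v)%N -> open (P v k) /\ closed (P v k)
                                         /\ P v k !=set0),
      (forall x, exists v k, (1 <= k <= h v)%N /\ P v k x),
      (forall v k v' k' x, (1 <= k <= h v)%N -> (1 <= k' <= h v')%N ->
          P v k x -> P v' k' x -> v = v' /\ k = k'),
      (forall v k, (1 <= k < h v)%N -> a @` P v k = P v k.+1) &
      a @` roof h P = base P].

Definition o_const_on_tildeP (V : finType) (h : V -> nat)
  (P : V -> nat -> set X) (o : X -> bool) : Prop :=
  (forall v k x y, (1 <= k < h v)%N -> P v k x -> P v k y -> o x = o y) /\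
  (forall x y, roof h P x -> roof h P y -> o x = o y).

Definition ov_one (a : X -> X) (V : finType) (h : V -> nat)
  (P : V -> nat -> set X) (o : X -> bool) (v : V) : Prop :=
  exists x, P v 1%N x /\ odd (\sum_(i < h v) o (iter i a x)).

Definition h_phi (ai : X -> X) (o : X -> bool) (x : X) : int :=
  (o (ai x) : nat)%:Z.

Definition alpha_star (ai : X -> X) (o : X -> bool) (f : X -> int) (x : X)
  : int := (-1) ^+ (o (ai x) : nat) * f (ai x).

(* f ~ g in K_1(A_{x0}) = C(X,Z) / {f - alpha_phi^* f : f in C(X,Z), f x0 = 0}. *)
Definition K1_equiv (ai : X -> X) (o : X -> bool) (x0 : X) (f g : X -> int)
  : Prop :=
  exists u : X -> int, locally_constant u /\ u x0 = 0 /\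
    forall x, f x - g x = u x - alpha_star ai o u x.

From HB Require Import structures.
From mathcomp Require Import all_boot all_order all_algebra.
From mathcomp Require Import all_classical all_reals all_analysis.
From mathcomp Require Import zify ring.
(* The transfer function is u = p - g, where g is the roof function on the
   right-hand side and p x, for x on level k of a tower, is the parity of the
   number of orientation reversals met on the orbit from the roof (where
   o(phi) is the constant o x0) through levels 1, ..., k-1 up to x.  As
   o(phi) is constant on the sets of tilde P, p and g are constant on levels,
   so u is locally constant; on the roof p equals o(phi)_v, so u vanishes
   there, in particular at x0.  Going up one level, p flips exactly when
   b = o(phi)(alpha^-1 x) is 1, and c (+) b = b + (-1)^b c is then the
   identity h_phi - g = u - alpha_phi^* u; on the bottom level alpha^-1 x lies
   on the roof, where u = 0, and p x = o x0 = h_phi x. *)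

Set Implicit Arguments.
Unset Strict Implicit.
Unset Printing Implicit Defensive.

Import Order.TTheory GRing.Theory Num.Theory numFieldNormedType.Exports.
Local Open Scope classical_set_scope.
Local Open Scope ring_scope.

Lemma iter_can (T : Type) (f g : T -> T) (n : nat) :
  cancel f g -> cancel (iter n f) (iter n g).
Proof.
move=> fK; elim: n => [|n IHn] x //.
by rewrite [iter n.+1 f x]iterSr /= IHn fK.
Qed.

Lemma int_addb (b c : bool) :
  ((c (+) b : bool) : nat)%:Z = (b : nat)%:Z + (-1) ^+ (b : nat) * (c : nat)%:Z.
Proof. by case: b; case: c; rewrite ?expr0 ?expr1. Qed.

Section KakutaniRohlinTower.

Variables (a ai : X -> X) (V : finType) (h : V -> nat) (P : V -> nat -> set X).
Hypotheses (aK : cancel a ai) (aiK : cancel ai a) (KR : KR_partition a h P).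

Lemma KR_height_gt0 v : (0 < h v)%N.
Proof. by case: KR. Qed.

Lemma KR_top_level v : (1 <= h v <= h v)%N.
Proof. by rewrite leqnn andbT KR_height_gt0. Qed.

Lemma KR_level_open v k : (1 <= k <= h v)%N -> open (P v k).
Proof. by case: KR => _ [Pclopen _ _ _ _] /Pclopen[]. Qed.

Lemma KR_cover x : exists v k, (1 <= k <= h v)%N /\ P v k x.
Proof. by case: KR => _ []. Qed.

Lemma KR_level_uniq v k v' k' x : (1 <= k <= h v)%N -> (1 <= k' <= h v')%N ->
  P v k x -> P v' k' x -> v = v' /\ k = k'.
Proof. by case: KR => _ [_ _ Puniq _ _]; apply: Puniq. Qed.

Lemma KR_succ v k x : (1 <= k < h v)%N -> P v k x -> P v k.+1 (a x).
Proof. by case: KR => _ [_ _ _ Psucc _] hk Px; rewrite -Psucc //; exists x. Qed.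

Lemma KR_pred v k y : (1 < k <= h v)%N -> P v k y -> P v k.-1 (ai y).
Proof.
case: KR => _ [_ _ _ Psucc _] hk Py.
have [x Px <-] : (a @` P v k.-1) y by rewrite Psucc ?prednK //; lia.
by rewrite aK.
Qed.

Lemma KR_base_pred y : base P y -> roof h P (ai y).
Proof. by case: KR => _ [_ _ _ _ <-] [x Rx <-]; rewrite aK. Qed.

Lemma KR_iter_succ v x i : P v 1%N x -> (i < h v)%N -> P v i.+1 (iter i a x).
Proof.
move=> Px; elim: i => [|i IHi] hi //=.
by apply: KR_succ; [lia | apply: IHi; lia].
Qed.

Lemma KR_iter_top v x : P v 1%N x -> P v (h v) (iter (h v).-1 a x).
Proof.
move=> Px; rewrite -[in P v _](prednK (KR_height_gt0 v)).
by apply: KR_iter_succ; rewrite // prednK ?KR_height_gt0.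
Qed.

Lemma KR_iter_pred v k y i : (1 <= k <= h v)%N -> P v k y -> (i < k)%N ->
  P v (k - i) (iter i ai y).
Proof.
move=> hk Py; elim: i => [|i IHi] hi /=; first by rewrite subn0.
rewrite (_ : k - i.+1 = (k - i).-1)%N; last by lia.
by apply: KR_pred; [lia | apply: IHi; lia].
Qed.

Lemma KR_iter_base v k y : (1 <= k <= h v)%N -> P v k y ->
  P v 1%N (iter k.-1 ai y).
Proof.
move=> hk Py; rewrite -(_ : k - k.-1 = 1)%N; last by lia.
by apply: KR_iter_pred => //; lia.
Qed.

Variables (o : X -> bool) (x0 : X).
Hypotheses (o_const : o_const_on_tildeP h P o) (x0_roof : roof h P x0).

Lemma o_level_const v k x y : (1 <= k < h v)%N -> P v k x -> P v k y ->
  o x = o y.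
Proof. by case: o_const => oP _; apply: oP. Qed.

Lemma o_roof x : roof h P x -> o x = o x0.
Proof. by case: o_const => _ oR Rx; apply: oR. Qed.

(* Meaningful only when [k] is the level of [x]: the orbit is read upwards
   from [iter k.-1 ai x], the bottom of the tower. *)
Definition reversals_below (x : X) (k : nat) : nat :=
  \sum_(i < k.-1) o (iter i a (iter k.-1 ai x)).

Lemma reversals_below_level v k x y :
  (1 <= k <= h v)%N -> P v k x -> P v k y ->
  reversals_below x k = reversals_below y k.
Proof.
move=> hk Px Py; apply: eq_bigr => i _; congr nat_of_bool.
have hi : (i < h v)%N by have := ltn_ord i; lia.
apply: (@o_level_const v i.+1); first by have := ltn_ord i; lia.
  exact: KR_iter_succ (KR_iter_base hk Px) hi.
exact: KR_iter_succ (KR_iter_base hk Py) hi.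
Qed.

Lemma reversals_below_pred v k y : (1 < k <= h v)%N -> P v k y ->
  reversals_below y k = (reversals_below (ai y) k.-1 + o (ai y))%N.
Proof.
move=> hk Py; rewrite /reversals_below.
have -> : k.-1 = k.-2.+1 by lia.
by rewrite big_ord_recr iterSr (iter_can _ aiK).
Qed.

Lemma sum_o_tower v x : P v 1%N x ->
  (\sum_(i < h v) o (iter i a x) : nat) =
  (reversals_below (iter (h v).-1 a x) (h v) + o x0)%N.
Proof.
move=> Px; rewrite /reversals_below (iter_can _ aK).
rewrite -[in LHS](prednK (KR_height_gt0 v)) big_ord_recr /=.
by rewrite (o_roof (ex_intro _ v (KR_iter_top Px))).
Qed.

Definition reversal_parity (x : X) : bool :=
  `[< exists v k,
       [/\ (1 <= k <= h v)%N, P v k x & odd (o x0 + reversals_below x k)] >].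

Lemma reversal_parityE v k x : (1 <= k <= h v)%N -> P v k x ->
  reversal_parity x = odd (o x0 + reversals_below x k).
Proof.
move=> hk Px; apply/asboolP/idP => [[v' [k' [hk' Px' odd_x]]]|odd_x].
  by have [_ <-] := KR_level_uniq hk' hk Px' Px.
by exists v, k.
Qed.

Lemma ov_oneE v z : P v (h v) z ->
  `[< ov_one a h P o v >] = odd (o x0 + reversals_below z (h v)).
Proof.
move=> Pz; apply/asboolP/idP => [[x [Px]]|odd_z].
  rewrite sum_o_tower // addnC.
  by rewrite (reversals_below_level (KR_top_level v) (KR_iter_top Px) Pz).
have Pbottom := KR_iter_base (KR_top_level v) Pz.
exists (iter (h v).-1 ai z); split => //.
by rewrite sum_o_tower // (iter_can _ aiK) addnC.
Qed.

Definition roof_indicator (x : X) : int :=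
  \sum_(v : V | `[< ov_one a h P o v >]) \1_(P v (h v)) x.

Lemma roof_indicatorE v k x : (1 <= k <= h v)%N -> P v k x ->
  roof_indicator x = ((k == h v) && `[< ov_one a h P o v >] : nat)%:Z.
Proof.
move=> hk Px; rewrite /roof_indicator.
rewrite (eq_bigr (fun v' => ((v' == v) && (k == h v) : nat)%:Z)); last first.
  move=> v' _; rewrite indicE natz; congr (Posz (nat_of_bool _)).
  apply/idP/andP => [|[/eqP -> /eqP <-]]; last by rewrite in_setE.
  by rewrite in_setE => /(KR_level_uniq (KR_top_level v') hk)/(_ Px)[-> ->].
have [ov|nov] := boolP `[< ov_one a h P o v >].
  rewrite (bigD1 v) //= eqxx andbT big1 ?addr0 // => v' /andP[_].
  by move/negbTE => ->.
rewrite andbF big1 // => v' ov'; case: eqP => // ev.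
by move: nov; rewrite -ev ov'.
Qed.

Definition transfer (x : X) : int :=
  (reversal_parity x : nat)%:Z - roof_indicator x.

Lemma transfer_roof x : roof h P x -> transfer x = 0.
Proof.
case=> v Px; have hv := KR_top_level v.
rewrite /transfer (reversal_parityE hv Px) (roof_indicatorE hv Px).
by rewrite eqxx (ov_oneE Px) subrr.
Qed.

Lemma transfer_locally_constant : locally_constant transfer.
Proof.
move=> x; have [v [k [hk Px]]] := KR_cover x.
apply: filterS (open_nbhs_nbhs (conj (KR_level_open hk) Px)) => y Py.
rewrite /transfer (reversal_parityE hk Px) (reversal_parityE hk Py).
rewrite (roof_indicatorE hk Px) (roof_indicatorE hk Py).
by rewrite (reversals_below_level hk Px Py).
Qed.

Lemma transfer_coboundary y :
  h_phi ai o y - roof_indicator y = transfer y - alpha_star ai o transfer y.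
Proof.
rewrite /h_phi /alpha_star; have [v [k [hk Py]]] := KR_cover y.
have [k1|k_gt1] := eqVneq k 1%N.
  have /KR_base_pred ai_y_roof : base P y by exists v; rewrite -k1.
  rewrite (transfer_roof ai_y_roof) mulr0 subr0 /transfer.
  rewrite (reversal_parityE hk Py) k1 /reversals_below big_ord0 addn0 oddb.
  by rewrite (o_roof ai_y_roof).
have hk1 : (1 < k <= h v)%N by lia.
have hk' : (1 <= k.-1 <= h v)%N by lia.
have Py' := KR_pred hk1 Py.
rewrite /transfer (reversal_parityE hk Py) (reversal_parityE hk' Py').
rewrite (roof_indicatorE hk' Py') (_ : k.-1 == h v = false) /=; last by lia.
by rewrite (reversals_below_pred hk1 Py) addnA oddD oddb int_addb; ring.
Qed.

End KakutaniRohlinTower.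

Theorem lemma6p2 (R : realType) (a ai : X -> X) (o : X -> bool) (th : X -> R)
  (V : finType) (h : V -> nat) (P : V -> nat -> set X) (x0 : X) :
  continuous a -> continuous ai -> cancel a ai -> cancel ai a ->
  minimal_map a ->
  continuous_phi o th ->
  skew_minimal a o th ->
  ~ orientation_preserving ai o ->
  KR_partition a h P ->
  roof h P x0 ->
  o_const_on_tildeP h P o ->
  K1_equiv ai o x0 (h_phi ai o)
    (fun x => \sum_(v : V | `[< ov_one a h P o v >]) \1_(P v (h v)) x).
Proof.
move=> _ _ aK aiK _ _ _ _ KR x0_roof o_const.
exists (transfer a ai h P o x0); split; last split.
- exact: transfer_locally_constant.
- exact: transfer_roof.
- exact: transfer_coboundary.
Qed.
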